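(* Let $\mathbb{K}\in\{\mathbb{R},\mathbb{C}\}$ and $\mathcal{A}=(A_1,\ldots,A_d)$ positive semidefinite matrices in $\mathbb{K}^{n\times n}$. For all positive integers $k,m$ with $mk\le d$, $$\mathrm{SRel}_{mk}(\mathcal{A})\le\mathrm{SRel}_k(\mathcal{A}).$$
   Context: $\langle x,y\rangle=x^\dagger y$ with $\dagger$ the (conjugate) transpose, $\|x\|^2=\langle x,x\rangle$. A real polynomial $f$ is written $f\succeq0$ if it is a sum of squares of real polynomials; when $\mathbb{K}=\mathbb{C}$, polynomials in $x$ are regarded as real polynomials in the $2n$ real variables $\operatorname{Re}x,\operatorname{Im}x$. Let $\mathcal{S}_k$ be the set of $k$-element subsets of $\{1,\ldots,d\}$, and for $t\in\mathbb{R}^d$, $E_k(t)=\binom dk^{-1}\sum_{I\in\mathcal{S}_k}\prod_{i\in I}t_i$. Define $\mathrm{SRel}_k(\mathcal{A})=\inf\{\lambda^{1/k}:\ \lambda\ge0,\ \lambda\|x\|^{2k}-E_k(\langle x,A_1x\rangle,\ldots,\langle x,A_dx\rangle)\succeq0\}$. *)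

From HB Require Import structures.
From mathcomp Require Import all_boot all_order all_algebra.
From mathcomp Require Import classical_sets reals exp.
From mathcomp Require Import complex.
From mathcomp Require mpoly.

Set Implicit Arguments.
Unset Strict Implicit.
Unset Printing Implicit Defensive.
Import Order.TTheory GRing.Theory Num.Theory.
Local Open Scope ring_scope.
Local Open Scope classical_set_scope.

Definition elemE {K : fieldType} (d k : nat) (t : 'I_d -> K) : K :=
  ('C(d, k)%:R)^-1 * \sum_(I : {set 'I_d} | #|I| == k) \prod_(i in I) t i.

Definition sos_fun {R : realType} (N : nat) (f : ('I_N -> R) -> R) : Prop :=
  exists s : seq (mpoly.mpoly N R),
    forall v : 'I_N -> R, f v = \sum_(q <- s) (mpoly.meval v q) ^+ 2.

Definition vecR {R : realType} (n : nat) (v : 'I_n -> R) : 'cV[R]_n :=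
  \col_i v i.

Definition formR {R : realType} (n : nat) (A : 'M[R]_n) (x : 'cV[R]_n) : R :=
  (x^T *m A *m x) 0 0.

Definition psdR {R : realType} (n : nat) (A : 'M[R]_n) : Prop :=
  A^T = A /\ forall x : 'cV[R]_n, 0 <= formR A x.

Definition feasR {R : realType} (n d k : nat) (A : 'I_d -> 'M[R]_n) (lam : R)
  : Prop :=
  0 <= lam /\
  sos_fun (fun v : 'I_n -> R =>
     lam * (formR 1%:M (vecR v)) ^+ k
     - elemE k (fun i => formR (A i) (vecR v))).

Definition SRelR {R : realType} (n d k : nat) (A : 'I_d -> 'M[R]_n) : R :=
  inf [set powR lam (k%:R^-1) | lam in feasR k A].

(* x in C^n given by its 2n real coordinates (Re x, Im x) *)
Definition vecC {R : realType} (n : nat) (v : 'I_(n + n) -> R) : 'cV[R[i]]_n :=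
  \col_i (v (lshift n i) +i* v (rshift n i))%C.

Definition formC {R : realType} (n : nat) (A : 'M[R[i]]_n) (x : 'cV[R[i]]_n)
  : R[i] :=
  ((map_mx Num.conj x)^T *m A *m x) 0 0.

Definition psdC {R : realType} (n : nat) (A : 'M[R[i]]_n) : Prop :=
  (map_mx Num.conj A)^T = A /\ forall x : 'cV[R[i]]_n, 0 <= formC A x.

(* the polynomial lam ||x||^{2k} - E_k(<x,A_1 x>,...,<x,A_d x>), regarded as a
   real polynomial in the 2n real variables (Re x, Im x), is a sum of squares *)
Definition feasC {R : realType} (n d k : nat) (A : 'I_d -> 'M[R[i]]_n) (lam : R)
  : Prop :=
  0 <= lam /\
  exists s : seq (mpoly.mpoly (n + n) R),
    forall v : 'I_(n + n) -> R,
      (lam%:C)%C * (formC 1%:M (vecC v)) ^+ k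
      - elemE k (fun i => formC (A i) (vecC v))
      = ((\sum_(q <- s) (mpoly.meval v q) ^+ 2)%:C)%C.

Definition SRelC {R : realType} (n d k : nat) (A : 'I_d -> 'M[R[i]]_n) : R :=
  inf [set powR lam (k%:R^-1) | lam in feasC k A].

From Pilot Require Import Defs.
From HB Require Import structures.
From mathcomp Require Import classical_sets reals exp.
From mathcomp Require Import all_boot all_order all_algebra all_fingroup.
From mathcomp Require Import complex spectral sesquilinear.
From mathcomp Require Import ring lra.
From mathcomp Require Import mpoly.
Import Order.TTheory GRing.Theory Num.Theory.
(* [sesquilinear] exports a lemma named [formC]; re-import the quadratic form. *)
Import Defs.
Set Implicit Arguments.
Unset Strict Implicit.
Unset Printing Implicit Defensive.
Local Open Scope ring_scope.

(* Write [t_i = <x, A_i x>], [q = ||x||^2] and [E_r = E_r(t_1, ..., t_d)],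
   all regarded as real polynomials in the real coordinates of [x].  By the
   spectral theorem each [t_i] is a sum of squares (sos) and [c q - t_i] is
   sos for some [c >= 0].  The heart of the proof is the sos inequality
       [E_a E_b - E_(a+b) >= 0]   whenever [a + b <= d],
   obtained by writing [E_r] as an average over the symmetric group and
   exchanging one index at a time (sections [SymmetricMeans], [CrossSums],
   [SymmetricMeanSOS]).  By induction on [m] it turns a certificate
   [lam q^k - E_k >= 0] into [lam^m q^(mk) - E_(mk) >= 0]; hence [lam |-> lam^m]
   maps the feasible set of [SRel_k] into that of [SRel_(mk)], and
   [lam^(1/k) = (lam^m)^(1/(mk))] compares the infima (section [Relaxation]). *)

Section SumsOfSquares.
Variables (R : realType) (N : nat).
Local Notation fn := (('I_N -> R) -> R).

Definition is_poly (f : fn) : Prop :=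
  exists p : mpoly N R, forall v, f v = meval v p.

Lemma is_poly_ext (f g : fn) : is_poly f -> f =1 g -> is_poly g.
Proof. by move=> [p Hp] fg; exists p => v; rewrite -fg. Qed.

Lemma is_poly_const (c : R) : is_poly (fun _ => c).
Proof. by exists (mpolyC N c) => v; rewrite mevalC. Qed.

Lemma is_poly_var (i : 'I_N) : is_poly (fun v => v i).
Proof.
by exists (@mpolyX N R (mnm1 i)) => v; rewrite mevalXU.
Qed.

Lemma is_polyD (f g : fn) : is_poly f -> is_poly g -> is_poly (fun v => f v + g v).
Proof. by move=> [p Hp] [q Hq]; exists (p + q) => v; rewrite mevalD Hp Hq. Qed.

Lemma is_polyN (f : fn) : is_poly f -> is_poly (fun v => - f v).
Proof. by move=> [p Hp]; exists (- p) => v; rewrite mevalN Hp. Qed.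

Lemma is_polyB (f g : fn) : is_poly f -> is_poly g -> is_poly (fun v => f v - g v).
Proof. by move=> Hf Hg; apply: is_polyD => //; apply: is_polyN. Qed.

Lemma is_polyM (f g : fn) : is_poly f -> is_poly g -> is_poly (fun v => f v * g v).
Proof. by move=> [p Hp] [q Hq]; exists (p * q) => v; rewrite mevalM Hp Hq. Qed.

Lemma is_poly_sum (I : Type) (r : seq I) (F : I -> fn) :
  (forall i, is_poly (F i)) -> is_poly (fun v => \sum_(i <- r) F i v).
Proof.
move=> HF; elim: r => [|x r IH].
  by apply: is_poly_ext (is_poly_const 0) _ => v; rewrite big_nil.
by apply: is_poly_ext (is_polyD (HF x) IH) _ => v; rewrite big_cons.
Qed.

Local Notation sos := (@sos_fun R N).

Lemma sos_ext (f g : fn) : sos f -> f =1 g -> sos g.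
Proof. by move=> [s Hs] fg; exists s => v; rewrite -fg. Qed.

Lemma sos_is_poly (f : fn) : sos f -> is_poly f.
Proof.
move=> [s Hs]; apply: is_poly_ext (is_poly_sum s _) (fun v => esym (Hs v)) => p.
by apply: is_polyM; exists p.
Qed.

Lemma sos0 : sos (fun _ => 0).
Proof. by exists [::] => v; rewrite big_nil. Qed.

Lemma sosD (f g : fn) : sos f -> sos g -> sos (fun v => f v + g v).
Proof. by move=> [s Hs] [t Ht]; exists (s ++ t) => v; rewrite big_cat /= Hs Ht. Qed.

Lemma sos_sqr (f : fn) : is_poly f -> sos (fun v => f v ^+ 2).
Proof. by move=> [p Hp]; exists [:: p] => v; rewrite big_seq1 Hp. Qed.

Lemma sosM (f g : fn) : sos f -> sos g -> sos (fun v => f v * g v).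
Proof.
move=> [s Hs] [t Ht]; exists [seq x.1 * x.2 | x <- allpairs pair s t] => v.
rewrite Hs Ht big_map big_allpairs mulr_suml; apply: eq_bigr => p _.
by rewrite mulr_sumr; apply: eq_bigr => q _; rewrite mevalM exprMn.
Qed.

Lemma sos_const (c : R) : 0 <= c -> sos (fun _ => c).
Proof.
move=> c0; apply: sos_ext (sos_sqr (is_poly_const (Num.sqrt c))) _ => v.
by rewrite sqr_sqrtr.
Qed.

Lemma sosZ (c : R) (f : fn) : 0 <= c -> sos f -> sos (fun v => c * f v).
Proof. by move=> c0; apply: sosM (sos_const c0). Qed.

Lemma sos_sum (I : Type) (r : seq I) (P : pred I) (F : I -> fn) :
  (forall i, P i -> sos (F i)) -> sos (fun v => \sum_(i <- r | P i) F i v).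
Proof.
move=> HF; elim: r => [|x r IH]; first by apply: sos_ext sos0 _ => v; rewrite big_nil.
case Px: (P x); last by apply: sos_ext IH _ => v; rewrite big_cons Px.
by apply: sos_ext (sosD (HF x Px) IH) _ => v; rewrite big_cons Px.
Qed.

Lemma sos_prod (I : Type) (r : seq I) (P : pred I) (F : I -> fn) :
  (forall i, P i -> sos (F i)) -> sos (fun v => \prod_(i <- r | P i) F i v).
Proof.
move=> HF; elim: r => [|x r IH].
  by apply: sos_ext (sos_const ler01) _ => v; rewrite big_nil.
case Px: (P x); last by apply: sos_ext IH _ => v; rewrite big_cons Px.
by apply: sos_ext (sosM (HF x Px) IH) _ => v; rewrite big_cons Px.
Qed.

Lemma sosX (f : fn) (k : nat) : sos f -> sos (fun v => f v ^+ k).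
Proof.
move=> Hf; elim: k => [|k IH].
  by apply: sos_ext (sos_const ler01) _ => v; rewrite expr0.
by apply: sos_ext (sosM Hf IH) _ => v; rewrite exprS.
Qed.

Lemma sos_prod_mono (I : Type) (r : seq I) (P : pred I) (F G : I -> fn) :
  (forall i, sos (F i)) -> (forall i, sos (fun v => G i v - F i v)) ->
  sos (fun v => \prod_(i <- r | P i) G i v - \prod_(i <- r | P i) F i v).
Proof.
move=> HF HGF; have HG i : sos (G i).
  by apply: sos_ext (sosD (HF i) (HGF i)) _ => v; rewrite addrC subrK.
elim: r => [|x r IH]; first by apply: sos_ext sos0 _ => v; rewrite !big_nil subrr.
case Px: (P x); last by apply: sos_ext IH _ => v; rewrite !big_cons Px.
apply: sos_ext (sosD (sosM (HGF x) (@sos_prod _ r P G (fun i _ => HG i)))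
                    (sosM (HF x) IH)) _ => v.
by rewrite !big_cons Px; ring.
Qed.

End SumsOfSquares.

Arguments is_poly_const {R N}.
Arguments is_poly_var {R N}.
Arguments sos0 {R N}.

Section Exchange.
Variable T : finType.

Lemma exchange_ind (B : {set T}) (P : {set T} -> Prop) :
  P B ->
  (forall (S : {set T}) (x y : T), x \in S -> x \notin B -> y \in B -> y \notin S ->
     P (y |: (S :\ x)) -> P S) ->
  forall S : {set T}, #|S| = #|B| -> P S.
Proof.
move=> PB step S; have [n] := ubnP #|S :\: B|; elim: n S => [//|n IH] S ltn cSB.
have [sSB|/subsetPn [x xS xB]] := boolP (S \subset B).
  by have /eqP -> : S == B by rewrite eqEcard sSB cSB leqnn.
have [y yB yS] : exists2 y, y \in B & y \notin S.
  have [sBS|/subsetPn [y ? ?]] := boolP (B \subset S); last by exists y.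
  have /eqP eBS : B == S by rewrite eqEcard sBS cSB leqnn.
  by rewrite eBS xS in xB.
apply: (step S x y) => //; apply: IH; last first.
  have yT : y \notin S :\ x by rewrite !inE negb_and yS orbT.
  by rewrite cardsU1 yT -cSB (cardsD1 x S) xS.
rewrite -ltnS; apply: leq_trans ltn; apply: proper_card; apply/properP; split.
  apply/subsetP => z; rewrite !inE => /andP [zB /orP [/eqP zy|/andP [_ zS]]].
    by rewrite zy yB in zB.
  by rewrite zB zS.
exists x; first by rewrite !inE xB xS.
by rewrite !inE xB eqxx /= orbF; apply: contraNneq xB => ->.
Qed.

Lemma tperm_exchange (S : {set T}) (x y : T) : x \in S -> y \notin S ->
  tperm x y @: S = y |: (S :\ x).
Proof.
move=> xS yS; rewrite -{1}(setD1K xS) imsetU1 tpermL; congr (_ |: _).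
rewrite -[RHS]imset_id; apply: eq_in_imset => z; rewrite !inE => /andP [zx zS].
by apply: tpermD; rewrite eq_sym //; apply: contraNneq yS => <-.
Qed.

Lemma perm_transitive (S B : {set T}) : #|S| = #|B| ->
  exists p : {perm T}, p @: S = B.
Proof.
move: S; apply: (exchange_ind (P := fun S => exists p : {perm T}, p @: S = B)).
  by exists 1%g; rewrite imset_perm1.
move=> S x y xS _ _ yS [p Hp].
exists (tperm x y * p)%g; rewrite -Hp -tperm_exchange // -imset_comp.
by apply: eq_imset => z; rewrite permM.
Qed.

Lemma card_perm_image_le (X I J : {set T}) (p : {perm T}) : p @: I = J ->
  (#|[set s : {perm T} | s @: X == I]| <= #|[set s : {perm T} | s @: X == J]|)%N.
Proof.
move=> pIJ; rewrite -(card_imset _ (mulIg p)); apply: subset_leq_card.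
apply/subsetP => _ /imsetP [s + ->]; rewrite inE => /eqP sXI.
by rewrite inE -pIJ -sXI -imset_comp; apply/eqP/eq_imset => z; rewrite /= permM.
Qed.

Lemma card_perm_image (X I : {set T}) : #|I| = #|X| ->
  #|[set s : {perm T} | s @: X == I]| = #|[set s : {perm T} | s @: X == X]|.
Proof.
move=> cIX; have [p pIX] := perm_transitive cIX.
apply/eqP; rewrite eqn_leq (card_perm_image_le X pIX) /=.
apply: (card_perm_image_le X (p := p^-1)); rewrite -pIX -imset_comp -[RHS]imset_id.
by apply: eq_imset => z /=; rewrite permK.
Qed.

Lemma subset_of_card (U : {set T}) (r : nat) : (r <= #|U|)%N ->
  exists2 X : {set T}, X \subset U & #|X| = r.
Proof.
move=> /card_geqP [s [us <- sU]]; exists [set:: s].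
  by apply/subsetP => x; rewrite inE; apply: sU.
by rewrite cardsE; apply/card_uniqP.
Qed.

End Exchange.

(** Elementary symmetric means as averages over the symmetric group. *)
Section SymmetricMeans.
Variables (R : numFieldType) (d : nat).
Implicit Types (A B S X : {set 'I_d}) (s : {perm 'I_d}) (f : 'I_d -> R).

Definition perm_prod S s f : R := \prod_(i in S) f (s i).

Definition sym_mean X f : R := (d`!%:R)^-1 * \sum_(s : {perm 'I_d}) perm_prod X s f.

Lemma perm_prod_image S s f : perm_prod S s f = \prod_(j in s @: S) f j.
Proof. by rewrite big_imset //; move=> x y _ _; apply: perm_inj. Qed.

Lemma sum_perm_image X (G : {set 'I_d} -> R) :
  \sum_(s : {perm 'I_d}) G (s @: X) =
  #|[set s : {perm 'I_d} | s @: X == X]|%:R * \sum_(I : {set 'I_d} | #|I| == #|X|) G I.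
Proof.
rewrite (partition_big (fun s : {perm 'I_d} => s @: X) (fun I => #|I| == #|X|));
  last first.
  by move=> s _; rewrite card_imset //; apply: perm_inj.
rewrite mulr_sumr; apply: eq_bigr => I /eqP cI.
rewrite (eq_bigr (fun _ => G I)); last by move=> s /andP [_ /eqP ->].
rewrite sumr_const -(card_perm_image cI) mulr_natl; congr (_ *+ _).
by apply: eq_card => s; rewrite !inE.
Qed.

Lemma elemE_sym_mean X f : elemE #|X| f = sym_mean X f.
Proof.
have count := sum_perm_image X (fun _ => 1).
have draws : #|[pred I : {set 'I_d} | #|I| == #|X|]| = 'C(d, #|X|).
  have := card_draws 'I_d #|X|; rewrite card_ord => <-.
  by apply: eq_card => I; rewrite inE.
rewrite sumr_const card_Sn sumr_const draws -natrM in count.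
move/eqP: count; rewrite eqr_nat => /eqP count.
rewrite /sym_mean (eq_bigr _ (fun s _ => perm_prod_image X s f)).
rewrite (sum_perm_image X (fun I => \prod_(j in I) f j)) /elemE count natrM.
have cnt0 : (#|[set s : {perm 'I_d} | s @: X == X]|%:R : R) != 0.
  by rewrite pnatr_eq0; apply: contraTneq (fact_gt0 d) => c0; rewrite count c0.
have bin0 : ('C(d, #|X|)%:R : R) != 0.
  by rewrite pnatr_eq0 -lt0n bin_gt0 -[X in (_ <= X)%N](card_ord d) max_card.
by field; apply/andP.
Qed.

End SymmetricMeans.

Section CrossSums.
Variables (R : numFieldType) (d : nat).
Implicit Types (A B S T : {set 'I_d}) (f : 'I_d -> R).

Definition cross_sum A S f : R :=
  \sum_(s : {perm 'I_d}) perm_prod A s f * perm_prod S s f.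

Lemma perm_prod_fix S (s tau : {perm 'I_d}) f :
  {in S, forall i, tau i = i} -> perm_prod S (tau * s)%g f = perm_prod S s f.
Proof. by move=> fixS; apply: eq_bigr => i iS; rewrite permM fixS. Qed.

Lemma tperm_fix S (p j : 'I_d) : p \notin S -> j \notin S ->
  {in S, forall i, tperm p j i = i}.
Proof.
by move=> pS jS i iS; apply: tpermD; [move: pS | move: jS]; apply: contraNneq => ->.
Qed.

Lemma perm_prodU1 S (p : 'I_d) (s : {perm 'I_d}) f : p \notin S ->
  perm_prod (p |: S) s f = f (s p) * perm_prod S s f.
Proof. exact: big_setU1. Qed.

Lemma perm_prod_imset S (r s : {perm 'I_d}) f :
  perm_prod (r @: S) s f = perm_prod S (r * s)%g f.
Proof.
rewrite /perm_prod big_imset /=; last by move=> x y _ _; apply: perm_inj.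
by apply: eq_bigr => i _; rewrite permM.
Qed.

(* Exchanging two indices outside [A] does not change the cross sum: the
   transposition [tperm p j] reindexes one sum into the other. *)
Lemma cross_sum_exchange_out A T (p j : 'I_d) f :
  p \notin A -> j \notin A -> p \notin T -> j \notin T ->
  cross_sum A (p |: T) f = cross_sum A (j |: T) f.
Proof.
move=> pA jA pT jT; rewrite /cross_sum (reindex_inj (mulgI (tperm p j))) /=.
have [fixA fixT] := (tperm_fix pA jA, tperm_fix pT jT).
by apply: eq_bigr => s _; rewrite !perm_prodU1 // !perm_prod_fix // permM tpermL.
Qed.

Lemma cross_sum_exchange_in A T (p j : 'I_d) f :
  p \in A -> j \notin A -> p \notin T -> j \notin T ->
  cross_sum A (p |: T) f - cross_sum A (j |: T) f =
  \sum_(s : {perm 'I_d})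
     2^-1 * (perm_prod (A :\ p) s f * perm_prod T s f) * (f (s p) - f (s j)) ^+ 2.
Proof.
move=> pA jA pT jT; set w := fun s => perm_prod (A :\ p) s f * perm_prod T s f.
have pAp : p \notin A :\ p by rewrite !inE eqxx.
have jAp : j \notin A :\ p by rewrite !inE negb_and jA orbT.
have splitA s : perm_prod A s f = f (s p) * perm_prod (A :\ p) s f.
  exact: big_setD1.
have sym : \sum_(s : {perm 'I_d}) w s * f (s p) ^+ 2 =
           \sum_(s : {perm 'I_d}) w s * f (s j) ^+ 2.
  have [fixA fixT] := (tperm_fix pAp jAp, tperm_fix pT jT).
  rewrite (reindex_inj (mulgI (tperm p j))) /=; apply: eq_bigr => s _.
  by rewrite /w !perm_prod_fix // permM tpermL.
have -> : cross_sum A (p |: T) f = \sum_(s : {perm 'I_d}) w s * f (s p) ^+ 2.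
  by apply: eq_bigr => s _; rewrite splitA perm_prodU1 // /w; ring.
have -> : cross_sum A (j |: T) f =
          \sum_(s : {perm 'I_d}) w s * (f (s p) * f (s j)).
  by apply: eq_bigr => s _; rewrite splitA perm_prodU1 // /w; ring.
have -> : \sum_(s : {perm 'I_d}) w s * f (s p) ^+ 2 =
    2^-1 * \sum_(s : {perm 'I_d}) w s * f (s p) ^+ 2 +
    2^-1 * \sum_(s : {perm 'I_d}) w s * f (s j) ^+ 2 by rewrite -sym; field.
rewrite !mulr_sumr -big_split -sumrB /=.
by apply: eq_bigr => s _; rewrite /w; field.
Qed.

Lemma sym_meanM_cross A B f :
  sym_mean A f * sym_mean B f =
  (d`!%:R)^-2 * \sum_(r : {perm 'I_d}) cross_sum A (r @: B) f.
Proof.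
rewrite /sym_mean mulrACA -expr2 -exprVn; congr (_ * _).
rewrite /cross_sum exchange_big mulr_suml /=; apply: eq_bigr => s _.
rewrite mulr_sumr (reindex_inj (mulIg s)) /=; apply: eq_bigr => r _.
by rewrite perm_prod_imset.
Qed.

Lemma sym_meanU_cross A B f : [disjoint A & B] ->
  sym_mean (A :|: B) f =
  (d`!%:R)^-2 * \sum_(r : {perm 'I_d}) cross_sum A B f.
Proof.
move=> AB; rewrite /sym_mean.
have -> : \sum_(s : {perm 'I_d}) perm_prod (A :|: B) s f = cross_sum A B f.
  apply: eq_bigr => s _.
  by rewrite /perm_prod (eq_bigl [predU A & B]) ?bigU // => i; rewrite !inE.
rewrite sumr_const card_Sn -mulr_natr; field.
by rewrite pnatr_eq0 -lt0n fact_gt0.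
Qed.

End CrossSums.

(** Symmetric means of sums of squares [t_1, ..., t_d]: they are sums of
    squares, and they are sos-submultiplicative, [E_a E_b - E_(a+b) >= 0]. *)
Section SymmetricMeanSOS.
Variables (R : realType) (N d : nat) (t : 'I_d -> ('I_N -> R) -> R).
Hypothesis t_sos : forall i, sos_fun (t i).
Local Notation at_ v := (fun i => t i v).

Lemma sos_perm_prod (S : {set 'I_d}) (s : {perm 'I_d}) :
  sos_fun (fun v => perm_prod S s (at_ v)).
Proof. by apply: sos_prod => i _; apply: t_sos. Qed.

Lemma sos_sym_mean (X : {set 'I_d}) : sos_fun (fun v => sym_mean X (at_ v)).
Proof.
apply: sosZ; first by rewrite invr_ge0 ler0n.
by apply: sos_sum => s _; apply: sos_perm_prod.
Qed.

(* For [B] disjoint from [A], the cross sum [cross_sum A S] is minimal (in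
   the sos order) at [S = B] among sets of size [#|B|]: move [S] towards [B]
   one exchange at a time. *)
Lemma sos_cross_sum_exchange (A B S : {set 'I_d}) :
  [disjoint A & B] -> #|S| = #|B| ->
  sos_fun (fun v => cross_sum A S (at_ v) - cross_sum A B (at_ v)).
Proof.
move=> AB; move: S; apply: (exchange_ind (P := fun S =>
  sos_fun (fun v => cross_sum A S (at_ v) - cross_sum A B (at_ v)))).
  by apply: sos_ext sos0 _ => v; rewrite subrr.
move=> S x y xS xB yB yS IH; set T := S :\ x in IH.
have yA : y \notin A by rewrite disjoint_sym in AB; rewrite (disjointFr AB yB).
have xT : x \notin T by rewrite !inE eqxx.
have yT : y \notin T by rewrite !inE negb_and yS orbT.
have step : sos_fun (fun v =>
    cross_sum A (x |: T) (at_ v) - cross_sum A (y |: T) (at_ v)).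
  have [xA|xA] := boolP (x \in A); last first.
    by apply: sos_ext sos0 _ => v; rewrite (cross_sum_exchange_out _ xA yA xT yT) subrr.
  apply: sos_ext _ (fun v => esym (cross_sum_exchange_in (at_ v) xA yA xT yT)).
  apply: sos_sum => s _; apply: sosM; first apply: sosZ.
  - by rewrite invr_ge0 ler0n.
  - by apply: sosM; apply: sos_perm_prod.
  - by apply: sos_sqr; apply: is_polyB; apply: sos_is_poly.
apply: sos_ext (sosD step IH) _ => v.
by rewrite /T setD1K // subrKA.
Qed.

Lemma sos_sym_meanM (A B : {set 'I_d}) : [disjoint A & B] ->
  sos_fun (fun v =>
    sym_mean A (at_ v) * sym_mean B (at_ v) - sym_mean (A :|: B) (at_ v)).
Proof.
move=> AB; pose c : R := (d`!%:R)^-2.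
apply: (sos_ext (f := fun v => \sum_(r : {perm 'I_d})
  c * (cross_sum A (r @: B) (at_ v) - cross_sum A B (at_ v)))) => [|v].
  apply: sos_sum => r _; apply: sosZ; first by rewrite /c invr_ge0 exprn_ge0 ?ler0n.
  by apply: sos_cross_sum_exchange; rewrite // card_imset //; apply: perm_inj.
by rewrite sym_meanM_cross sym_meanU_cross // -mulrBr -sumrB mulr_sumr.
Qed.

Lemma sos_elemE (r : nat) : (r <= d)%N -> sos_fun (fun v => elemE r (at_ v)).
Proof.
rewrite -[d in (_ <= d)%N]card_ord -cardsT => /subset_of_card [X _ <-].
by apply: sos_ext (sos_sym_mean X) _ => v; rewrite elemE_sym_mean.
Qed.

Lemma sos_elemEM (a b : nat) : (a + b <= d)%N ->
  sos_fun (fun v => elemE a (at_ v) * elemE b (at_ v) - elemE (a + b) (at_ v)).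
Proof.
move=> abd; have ad : (a <= #|[set: 'I_d]|)%N.
  by rewrite cardsT card_ord (leq_trans (leq_addr b a)).
have [A _ cA] := subset_of_card ad.
have bd : (b <= #|~: A|)%N.
  by rewrite cardsCs setCK cA card_ord leq_subRL // (leq_trans (leq_addr b a)).
have [B sBA cB] := subset_of_card bd.
have AB : [disjoint A & B] by rewrite disjoint_sym disjoints_subset.
have cAB : #|A :|: B| = (a + b)%N.
  by rewrite cardsU (disjoint_setI0 AB) cards0 subn0 cA cB.
apply: sos_ext (sos_sym_meanM AB) _ => v.
by rewrite -cAB -cA -cB !elemE_sym_mean.
Qed.

End SymmetricMeanSOS.

Local Open Scope classical_set_scope.

Lemma inf_root_pow_le (R : realType) (F1 F2 : set R) (k m : nat) :
  (0 < k)%N -> (0 < m)%N -> (exists l, F1 l) -> (forall l, F1 l -> 0 <= l) ->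
  (forall l, F1 l -> F2 (l ^+ m)) ->
  inf [set powR l ((m * k)%:R^-1) | l in F2] <= inf [set powR l (k%:R^-1) | l in F1].
Proof.
move=> k0 m0 [l0 F1l0] F1_ge0 F12.
apply: lb_le_inf; first by exists (powR l0 (k%:R^-1)), l0.
move=> _ [l F1l <-].
have lb2 : has_lbound [set powR l ((m * k)%:R^-1) | l in F2].
  by exists 0 => _ [x _ <-]; apply: powR_ge0.
apply: (ge_inf lb2); exists (l ^+ m); first exact: F12.
rewrite -powR_mulrn ?F1_ge0 // -powRrM natrM invfM mulrA mulfV ?mul1r //.
by rewrite pnatr_eq0 -lt0n.
Qed.

(** The sos relaxation [lam q^r - E_r(t) >= 0] for abstract data: sums of
    squares [t_1, ..., t_d] dominated by multiples of a sum of squares [q]. *)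
Section Relaxation.
Variables (R : realType) (N d : nat).
Variables (t : 'I_d -> ('I_N -> R) -> R) (q : ('I_N -> R) -> R).
Hypothesis t_sos : forall i, sos_fun (t i).
Hypothesis q_sos : sos_fun q.
Local Notation at_ v := (fun i => t i v).

Definition relax_gap (r : nat) (lam : R) (v : 'I_N -> R) : R :=
  lam * q v ^+ r - elemE r (at_ v).

(* If [lam q^k - E_k] is sos, so is [lam^m q^(mk) - E_(mk)]: by induction,
   [lam^(m+1) q^((m+1)k) - E_((m+1)k)] is the sum of the sos terms
   [E_k E_(mk) - E_((m+1)k)], [E_k (lam^m q^(mk) - E_(mk))] and
   [(lam q^k - E_k) lam^m q^(mk)]. *)
Lemma sos_relax_gap_pow (k m : nat) (lam : R) : 0 <= lam ->
  sos_fun (relax_gap k lam) -> (0 < m)%N -> (m * k <= d)%N ->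
  sos_fun (relax_gap (m * k) (lam ^+ m)).
Proof.
move=> lam0 gap_k; case: m => // m _; elim: m => [|m IH] mkd.
  by apply: sos_ext gap_k _ => v; rewrite /relax_gap mul1n expr1.
have kd : (k <= d)%N by apply: leq_trans mkd; rewrite leq_pmull.
have mkd' : (m.+1 * k <= d)%N.
  by apply: leq_trans mkd; rewrite leq_mul2r leqnSn orbT.
have Emul := @sos_elemEM _ _ _ _ t_sos k (m.+1 * k).
rewrite -mulSn in Emul; have {}Emul := Emul mkd.
have qpow : sos_fun (fun v => lam ^+ m.+1 * q v ^+ (m.+1 * k)).
  by apply: sosZ; [apply: exprn_ge0 | apply: sosX].
apply: sos_ext (sosD Emul (sosD (sosM (sos_elemE t_sos kd) (IH mkd'))
                               (sosM gap_k qpow))) _ => v.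
by rewrite /relax_gap (mulSn m.+1 k) exprD [lam ^+ _.+2]exprS; ring.
Qed.

(* A uniform bound [t_i <= c q] gives the feasible value [c^r] for [E_r]:
   average the monotone products [prod_(i in X) t_(s i) <= (c q)^r]. *)
Lemma sos_relax_gap_bound (r : nat) (c : R) : (r <= d)%N -> 0 <= c ->
  (forall i, sos_fun (fun v => c * q v - t i v)) -> sos_fun (relax_gap r (c ^+ r)).
Proof.
rewrite -[d in (_ <= d)%N]card_ord -cardsT => /subset_of_card [X _ cX] c0 t_le.
apply: (sos_ext (f := fun v => (d`!%:R)^-1 * \sum_(s : {perm 'I_d})
          (\prod_(i in X) (c * q v) - perm_prod X s (at_ v)))).
  apply: sosZ; first by rewrite invr_ge0 ler0n.
  apply: sos_sum => s _.
  by apply: (@sos_prod_mono _ _ _ _ _ (fun i => t (s i)) (fun _ v => c * q v)).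
move=> v; rewrite /relax_gap -cX elemE_sym_mean /sym_mean sumrB mulrBr.
congr (_ - _); rewrite sumr_const card_Sn prodr_const exprMn -mulr_natr.
by field; rewrite pnatr_eq0 -lt0n fact_gt0.
Qed.

Lemma uniform_bound :
  (forall i, exists2 c, 0 <= c & sos_fun (fun v => c * q v - t i v)) ->
  exists2 c, 0 <= c & forall i, sos_fun (fun v => c * q v - t i v).
Proof.
move=> /fin_all_exists2 [c c_ge0 t_le]; exists (\sum_i c i) => [|i].
  exact: sumr_ge0.
have c_le : 0 <= \sum_i c i - c i.
  by rewrite subr_ge0 (bigD1 i) //= lerDl sumr_ge0.
by apply: sos_ext (sosD (sosZ c_le q_sos) (t_le i)) _ => v; ring.
Qed.

Definition feasible (r : nat) : set R :=
  [set lam | 0 <= lam /\ sos_fun (relax_gap r lam)].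

Definition relax_value (r : nat) : R :=
  inf [set powR lam (r%:R^-1) | lam in feasible r].

End Relaxation.

Lemma relax_value_mono (R : realType) (N d : nat)
    (t : 'I_d -> ('I_N -> R) -> R) (q : ('I_N -> R) -> R) (k m : nat) :
  (forall i, sos_fun (t i)) -> sos_fun q ->
  (forall i, exists2 c, 0 <= c & sos_fun (fun v => c * q v - t i v)) ->
  (0 < k)%N -> (0 < m)%N -> (m * k <= d)%N ->
  relax_value t q (m * k) <= relax_value t q k.
Proof.
move=> t_sos q_sos /(uniform_bound q_sos) [c c0 t_le] k0 m0 mkd.
have kd : (k <= d)%N by apply: leq_trans mkd; rewrite leq_pmull.
apply: inf_root_pow_le => //.
- by exists (c ^+ k); split; [apply: exprn_ge0 | apply: sos_relax_gap_bound].
- by move=> l [].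
- move=> l [l0 gap]; split; first exact: exprn_ge0.
  exact: sos_relax_gap_pow.
Qed.

(** Hermitian forms: spectral decomposition and the resulting sums of
    squares in the real coordinates of the vector. *)
Section HermitianForms.
Local Open Scope sesquilinear_scope.
Variables (R : realType) (n : nat).
Local Notation C := (R[i]).

Lemma formC_conj (P M : 'M[C]_n) (x : 'cV[C]_n) :
  formC (P ^t* *m M *m P) x = formC M (P *m x).
Proof.
have conjPx : (map_mx Num.conj (P *m x))^T = (map_mx Num.conj x)^T *m P ^t*.
  apply/matrixP => i j; rewrite !mxE rmorph_sum; apply: eq_bigr => k _.
  by rewrite !mxE rmorphM mulrC.
by rewrite /formC conjPx !mulmxA.
Qed.

Lemma formC_diag (D : 'rV[C]_n) (y : 'cV[C]_n) :
  formC (diag_mx D) y = \sum_j D 0 j * (Num.conj (y j 0) * y j 0).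
Proof.
rewrite /formC mul_mx_diag mxE; apply: eq_bigr => j _.
by rewrite !mxE; ring.
Qed.

Lemma psd_spectral_form (M : 'M[C]_n) : psdC M ->
  exists (P : 'M[C]_n) (D : 'I_n -> R), [/\ forall j, 0 <= D j,
   forall x, formC M x = \sum_j (D j)%:C%C * (Num.conj ((P *m x) j 0) * (P *m x) j 0) &
   forall x, formC 1%:M x = \sum_j Num.conj ((P *m x) j 0) * (P *m x) j 0].
Proof.
move=> [M_herm M_psd].
have Mh : M \is hermsymmx.
  by apply/is_hermitianmxP; rewrite expr0 scale1r -[LHS]M_herm map_trmx.
set P := spectralmx M; set D := spectral_diag M.
have P_unitary : P \is unitarymx := spectral_unitarymx M.
have invP : invmx P = P ^t* := invmx_unitary P_unitary.
have PtP : P ^t* *m P = 1%:M by rewrite -invP mulVmx // spectral_unit.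
have PPt : P *m P ^t* = 1%:M by apply/unitarymxP.
have D_real j : (complex.Re (D 0 j))%:C%C = D 0 j.
  by apply: RRe_real; have /mxOverP := hermitian_spectral_diag_real Mh; apply.
have M_spec : M = P ^t* *m diag_mx D *m P.
  by rewrite -invP; apply/orthomx_spectralP/hermitian_normalmx.
have formM x : formC M x = \sum_j D 0 j * (Num.conj ((P *m x) j 0) * (P *m x) j 0).
  by rewrite {1}M_spec formC_conj formC_diag.
exists P, (fun j => complex.Re (D 0 j)); split.
- move=> j; have := M_psd (P ^t* *m delta_mx j 0).
  rewrite formM mulmxA PPt mul1mx (bigD1 j) //= big1 => [|l lj]; last first.
    by rewrite !mxE (negbTE lj) /= conjC0 !mul0r mulr0.
  by rewrite !mxE !eqxx /= conjC1 !mulr1 addr0 -D_real ler0c.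
- by move=> x; rewrite formM; apply: eq_bigr => j _; rewrite D_real.
- move=> x; rewrite -[in LHS]PtP -[in LHS](mulmx1 (P ^t*)) formC_conj.
  by rewrite /formC mulmx1 mxE; apply: eq_bigr => j _; rewrite !mxE.
Qed.

End HermitianForms.

Section HermitianSOS.
Variables (R : realType) (n N : nat).
Local Notation C := (R[i]).
Local Notation Re := (@complex.Re R).
Local Notation Im := (@complex.Im R).

Lemma Re_sum (I : Type) (r : seq I) (F : I -> C) :
  Re (\sum_(i <- r) F i) = \sum_(i <- r) Re (F i).
Proof. exact: (@raddf_sum _ _ (Re : Rcomplex R -> R)). Qed.

Lemma Im_sum (I : Type) (r : seq I) (F : I -> C) :
  Im (\sum_(i <- r) F i) = \sum_(i <- r) Im (F i).
Proof. exact: (@raddf_sum _ _ (Im : Rcomplex R -> R)). Qed.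

Lemma conjC_mul_self (y : C) : Num.conj y * y = (Re y ^+ 2 + Im y ^+ 2)%:C%C.
Proof.
by case: y => a b; apply/eqP; rewrite eq_complex /=; apply/andP; split; apply/eqP; ring.
Qed.

Lemma formC1 (x : 'cV[C]_n) :
  formC 1%:M x = (\sum_j (Re (x j 0) ^+ 2 + Im (x j 0) ^+ 2))%:C%C.
Proof.
rewrite /formC mulmx1 mxE rmorph_sum; apply: eq_bigr => j _.
by rewrite !mxE conjC_mul_self.
Qed.

Variable L : ('I_N -> R) -> 'cV[C]_n.
Hypothesis L_Re : forall l, is_poly (fun v => Re (L v l 0)).
Hypothesis L_Im : forall l, is_poly (fun v => Im (L v l 0)).

Lemma is_poly_mulmx (P : 'M[C]_n) (j : 'I_n) :
  is_poly (fun v => Re ((P *m L v) j 0)) /\ is_poly (fun v => Im ((P *m L v) j 0)).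
Proof.
split.
  apply: (is_poly_ext (f := fun v => \sum_l (Re (P j l) * Re (L v l 0) -
                                           Im (P j l) * Im (L v l 0)))).
    by apply: is_poly_sum => l; apply: is_polyB; apply: is_polyM => //;
      apply: is_poly_const.
  move=> v; rewrite mxE Re_sum; apply: eq_bigr => l _.
  by case: (P j l); case: (L v l 0).
apply: (is_poly_ext (f := fun v => \sum_l (Re (P j l) * Im (L v l 0) +
                                         Im (P j l) * Re (L v l 0)))).
  by apply: is_poly_sum => l; apply: is_polyD; apply: is_polyM => //;
    apply: is_poly_const.
move=> v; rewrite mxE Im_sum; apply: eq_bigr => l _.
by case: (P j l); case: (L v l 0).
Qed.

Lemma sos_formC1 : sos_fun (fun v => Re (formC 1%:M (L v))).
Proof.
apply: (sos_ext (f := fun v => \sum_j (Re (L v j 0) ^+ 2 + Im (L v j 0) ^+ 2))).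
  by apply: sos_sum => j _; apply: sosD; apply: sos_sqr.
by move=> v; rewrite formC1.
Qed.

(* A positive semidefinite Hermitian form evaluated at [L v] is real, a sum
   of squares in [v], and bounded by a multiple of [||L v||^2] (the bound
   [c] being the trace). *)
Lemma psd_form_sos (M : 'M[C]_n) : psdC M ->
  [/\ forall v, formC M (L v) = (Re (formC M (L v)))%:C%C,
      sos_fun (fun v => Re (formC M (L v))) &
      exists2 c, 0 <= c &
        sos_fun (fun v => c * Re (formC 1%:M (L v)) - Re (formC M (L v)))].
Proof.
move=> /psd_spectral_form [P [D [D_ge0 formM form1]]].
pose w j v := Re ((P *m L v) j 0) ^+ 2 + Im ((P *m L v) j 0) ^+ 2.
have w_sos j : sos_fun (w j).
  by have [? ?] := is_poly_mulmx P j; apply: sosD; apply: sos_sqr.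
have formMw v : formC M (L v) = (\sum_j D j * w j v)%:C%C.
  by rewrite formM rmorph_sum; apply: eq_bigr => j _; rewrite conjC_mul_self rmorphM.
have form1w v : formC 1%:M (L v) = (\sum_j w j v)%:C%C.
  by rewrite form1 rmorph_sum; apply: eq_bigr => j _; rewrite conjC_mul_self.
split.
- by move=> v; rewrite {2}formMw.
- apply: (sos_ext (f := fun v => \sum_j D j * w j v)); last by move=> v; rewrite formMw.
  by apply: sos_sum => j _; apply: sosZ.
exists (\sum_j D j); first exact: sumr_ge0.
apply: (sos_ext (f := fun v => \sum_j (\sum_l D l - D j) * w j v)).
  apply: sos_sum => j _; apply: sosZ => //.
  by rewrite subr_ge0 (bigD1 j) //= lerDl sumr_ge0.
move=> v; rewrite form1w formMw /= mulr_sumr -sumrB.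
by apply: eq_bigr => j _; rewrite mulrBl.
Qed.

End HermitianSOS.

Lemma elemE_rmorph (K L : fieldType) (phi : {rmorphism K -> L}) (d k : nat)
    (f : 'I_d -> K) :
  phi (elemE k f) = elemE k (fun i => phi (f i)).
Proof.
rewrite /elemE rmorphM fmorphV rmorph_nat rmorph_sum; congr (_ * _).
by apply: eq_bigr => I _; rewrite rmorph_prod.
Qed.

(** Real symmetric matrices as Hermitian matrices with real entries. *)
Section RealSymmetric.
Variables (R : realType) (n : nat).
Local Notation C := (R[i]).
Local Notation Re := (@complex.Re R).
Local Notation Im := (@complex.Im R).
Local Notation rc := (real_complex R).

Lemma formC_sum (M : 'M[C]_n) (z : 'cV[C]_n) :
  formC M z = \sum_j \sum_i Num.conj (z i 0) * M i j * z j 0.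
Proof.
rewrite /formC mxE; apply: eq_bigr => j _; rewrite mxE mulr_suml.
by apply: eq_bigr => i _; rewrite !mxE.
Qed.

Lemma formR_sum (M : 'M[R]_n) (u : 'cV[R]_n) :
  formR M u = \sum_j \sum_i u i 0 * M i j * u j 0.
Proof.
rewrite /formR mxE; apply: eq_bigr => j _; rewrite mxE mulr_suml.
by apply: eq_bigr => i _; rewrite !mxE.
Qed.

(* For symmetric [A], [z^* A z = (Re z)^T A (Re z) + (Im z)^T A (Im z)]: the
   cross terms cancel by symmetry. *)
Lemma formC_real (A : 'M[R]_n) (z : 'cV[C]_n) : A^T = A ->
  formC (map_mx rc A) z = (formR A (map_mx Re z) + formR A (map_mx Im z))%:C%C.
Proof.
move=> A_sym; have Aji i j : A j i = A i j by rewrite -[in LHS]A_sym mxE.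
apply/eqP; rewrite eq_complex; apply/andP; split; apply/eqP.
  rewrite formC_sum !formR_sum Re_sum /= -big_split; apply: eq_bigr => j _.
  rewrite Re_sum -big_split; apply: eq_bigr => i _; rewrite !mxE.
  by case: (z i 0) => a b; case: (z j 0) => c e /=; ring.
rewrite formC_sum Im_sum /= (eq_bigr (fun j => \sum_i A i j * Re (z i 0) * Im (z j 0) -
                                     \sum_i A i j * Im (z i 0) * Re (z j 0))).
  rewrite sumrB [X in _ - X]exchange_big /=; apply/eqP; rewrite subr_eq0; apply/eqP.
  by apply: eq_bigr => j _; apply: eq_bigr => i _; rewrite Aji; ring.
move=> j _; rewrite Im_sum -sumrB; apply: eq_bigr => i _; rewrite !mxE.
by case: (z i 0) => a b; case: (z j 0) => c e /=; ring.
Qed.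

Lemma formC_map_real (A : 'M[R]_n) (x : 'cV[R]_n) : A^T = A ->
  formC (map_mx rc A) (map_mx rc x) = (formR A x)%:C%C.
Proof.
move=> A_sym; rewrite formC_real //.
have -> : map_mx Re (map_mx rc x) = x by apply/matrixP => i j; rewrite !mxE.
have -> : map_mx Im (map_mx rc x) = 0 by apply/matrixP => i j; rewrite !mxE.
have form0 : formR A 0 = 0 by rewrite /formR mulmx0 mxE.
by rewrite form0 addr0.
Qed.

Lemma psdC_map_real (A : 'M[R]_n) : psdR A -> psdC (map_mx rc A).
Proof.
move=> [A_sym A_psd]; split => [|z]; last first.
  by rewrite formC_real // ler0c addr_ge0.
apply/matrixP => i j; rewrite !mxE -[in RHS]A_sym mxE.
by apply/eqP; rewrite eq_complex /= oppr0 !eqxx.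
Qed.

End RealSymmetric.

(* Real case: [SRelR] is by definition the relaxation value of
   [t_i = x^T A_i x] and [q = ||x||^2]; their sos properties come from the
   Hermitian forms of the complexified matrices evaluated at real vectors. *)
Lemma SRelR_mono (R : realType) (n d k m : nat) (A : 'I_d -> 'M[R]_n) :
  (forall i, psdR (A i)) -> (0 < k)%N -> (0 < m)%N -> (m * k <= d)%N ->
  SRelR (m * k) A <= SRelR k A.
Proof.
move=> A_psd k0 m0 mkd; pose rc := real_complex R.
pose L v : 'cV[R[i]]_n := map_mx rc (vecR v).
have L_Re l : is_poly (fun v => complex.Re (L v l 0)).
  by apply: is_poly_ext (is_poly_var l) _ => v; rewrite !mxE.
have L_Im l : is_poly (fun v => complex.Im (L v l 0)).
  by apply: is_poly_ext (is_poly_const 0) _ => v; rewrite !mxE.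
have ReL M v : M^T = M -> complex.Re (formC (map_mx rc M) (L v)) = formR M (vecR v).
  by move=> M_sym; rewrite formC_map_real.
have map1 : map_mx rc 1%:M = 1%:M :> 'M_n by rewrite map_scalar_mx rmorph1.
have q_sos : sos_fun (fun v : 'I_n -> R => formR 1%:M (vecR v)).
  by apply: sos_ext (sos_formC1 L_Re L_Im) _ => v; rewrite -map1 ReL ?trmx1.
have form_sos i := psd_form_sos L_Re L_Im (psdC_map_real (A_psd i)).
apply: (relax_value_mono (t := fun i v => formR (A i) (vecR v))) => // i.
  have [_ Ai_sos _] := form_sos i.
  by apply: sos_ext Ai_sos _ => v; rewrite ReL //; case: (A_psd i).
have [_ _ [c c0 Ai_le]] := form_sos i; exists c => //.
by apply: sos_ext Ai_le _ => v; rewrite -map1 !ReL ?trmx1 //; case: (A_psd i).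
Qed.

(* Complex case: [<x, A_i x>] and [||x||^2] are real, so the feasible sets
   of [SRelC] are those of the relaxation for their real parts. *)
Lemma SRelC_mono (R : realType) (n d k m : nat) (A : 'I_d -> 'M[R[i]]_n) :
  (forall i, psdC (A i)) -> (0 < k)%N -> (0 < m)%N -> (m * k <= d)%N ->
  SRelC (m * k) A <= SRelC k A.
Proof.
move=> A_psd k0 m0 mkd.
pose t i (v : 'I_(n + n) -> R) := complex.Re (formC (A i) (vecC v)).
pose q (v : 'I_(n + n) -> R) := complex.Re (formC 1%:M (vecC v)).
have L_Re l : is_poly (fun v : 'I_(n + n) -> R => complex.Re (vecC v l 0)).
  by apply: is_poly_ext (is_poly_var (lshift n l)) _ => v; rewrite !mxE.
have L_Im l : is_poly (fun v : 'I_(n + n) -> R => complex.Im (vecC v l 0)).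
  by apply: is_poly_ext (is_poly_var (rshift n l)) _ => v; rewrite !mxE.
have form_sos i := psd_form_sos L_Re L_Im (A_psd i).
have gapC r lam v : (lam%:C * formC 1%:M (vecC v) ^+ r -
    elemE r (fun i => formC (A i) (vecC v)))%C = (relax_gap t q r lam v)%:C%C.
  have realA : (fun i => formC (A i) (vecC v)) = (fun i => (t i v)%:C%C).
    by apply: boolp.funext => i; have [->] := form_sos i.
  have real1 : formC 1%:M (vecC v) = (q v)%:C%C by rewrite /q formC1.
  by rewrite realA real1 -elemE_rmorph -rmorphXn -rmorphM -rmorphB.
have feasCE r : feasC r A = feasible t q r.
  apply/boolp.funext => lam; apply/boolp.propext.
  split=> -[lam0 [s Hs]]; split=> //; exists s => v.
    by apply: complexI; rewrite -gapC Hs.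
  by rewrite gapC Hs.
rewrite /SRelC !feasCE; apply: relax_value_mono => //.
- by move=> i; have [] := form_sos i.
- exact: sos_formC1.
- by move=> i; have [] := form_sos i.
Qed.

Theorem mainTheorem13 (R : realType) (n d k m : nat) :
  (0 < k)%N -> (0 < m)%N -> (m * k <= d)%N ->
  (forall A : 'I_d -> 'M[R]_n, (forall i, psdR (A i)) ->
     SRelR (m * k) A <= SRelR k A) /\
  (forall A : 'I_d -> 'M[R[i]]_n, (forall i, psdC (A i)) ->
     SRelC (m * k) A <= SRelC k A).
Proof.
move=> k0 m0 mkd; split=> A A_psd; [exact: SRelR_mono | exact: SRelC_mono].
Qed.
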